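(* Let $X_1,\dots,X_k$ be Boolean variables and consider a classical logistic regression model with bias $\theta_0\in\mathbb{R}$ and weights $\theta_1,\dots,\theta_k\in\mathbb{R}$, defining $\Pr(Y=1\mid \mathbf{x}) = 1/\bigl(1+\exp(-(\theta_0+\sum_{i=1}^k \theta_i x_i))\bigr)$ for inputs $\mathbf{x}=(x_1,\dots,x_k)$. Then there exists a logistic circuit over $X_1,\dots,X_k$ that is equivalent to this model, i.e. it defines the same conditional distribution $\Pr(Y=1\mid\mathbf{x})$ for every input $\mathbf{x}\in[0,1]^k$.
   Context: A logical circuit over Boolean variables $X_1,\dots,X_k$ is a rooted directed acyclic graph whose leaves are literals $X_i$ or $\neg X_i$ and whose inner nodes are AND gates or OR gates; each node represents a logical sentence in the usual way. An AND gate is decomposable if its inputs mention pairwise disjoint sets of variables; an OR gate is deterministic if for every complete assignment at most one of its inputs is satisfied. A logistic circuit is a logical circuit whose root is an OR gate, all of whose AND gates are decomposable and all of whose OR gates are deterministic, together with a real parameter $\theta$ on each input wire of each OR gate. For an input $\mathbf{x}\in[0,1]^k$, let $\Pr_{\mathbf{x}}$ be the fully factorized distribution with $\Pr_{\mathbf{x}}(X_i=1)=x_i$ independently, and $\Pr_{\mathbf{x}}(n)$ the probability of the sentence represented by node $n$. For an OR gate $n$ with child $c$, the flow is $f(n,\mathbf{x},c)=\Pr_{\mathbf{x}}(c)/\Pr_{\mathbf{x}}(n)$ (taken to be $0$ if $\Pr_{\mathbf{x}}(n)=0$); for Boolean $\mathbf{x}$ this equals $1$ if $\mathbf{x}$ satisfies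 $c$ and $0$ otherwise. The weight function is defined bottom-up: $g_n(\mathbf{x})=0$ for a leaf; $g_n(\mathbf{x})=\sum_i g_{c_i}(\mathbf{x})$ for an AND gate with children $c_i$; $g_n(\mathbf{x})=\sum_i f(n,\mathbf{x},c_i)\,(g_{c_i}(\mathbf{x})+\theta_i)$ for an OR gate with inputs $(c_i,\theta_i)$. With root $r$, the logistic circuit defines $\Pr(Y=1\mid\mathbf{x})=1/(1+\exp(-g_r(\mathbf{x})))$. *)

From HB Require Import structures.
From mathcomp Require Import all_boot all_order all_algebra.
From mathcomp Require Import reals sequences exp.
Set Implicit Arguments. Unset Strict Implicit. Unset Printing Implicit Defensive.
Import Order.TTheory GRing.Theory Num.Theory.
Local Open Scope ring_scope.

(* A DAG is represented by its
   tree unfolding (sharing does not affect any of the semantics below). *)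
Inductive circuit (k : nat) (R : Type) : Type :=
| Lit  of 'I_k & bool
| And  of seq (circuit k R)
| Or   of seq (circuit k R * R).

Arguments Lit {k R}.
Arguments And {k R}.
Arguments Or {k R}.

Section Semantics.
Variables (k : nat) (R : realType).
Local Notation circ := (circuit k R).

Fixpoint sat (c : circ) (a : 'I_k -> bool) : bool :=
  match c with
  | Lit i b => a i == b
  | And cs => all (fun d => sat d a) cs
  | Or cs => has (fun p => sat p.1 a) cs
  end.

Fixpoint vars (c : circ) : seq 'I_k :=
  match c with
  | Lit i _ => [:: i]
  | And cs => flatten (map vars cs)
  | Or cs => flatten (map (fun p => vars p.1) cs)
  end.

Definition disjoint_vars (c d : circ) : bool :=
  all (fun v => v \notin vars d) (vars c).

Fixpoint decomp_determ (c : circ) : bool :=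
  match c with
  | Lit _ _ => true
  | And cs => all decomp_determ cs && pairwise disjoint_vars cs
  | Or cs => all (fun p => decomp_determ p.1) cs &&
             [forall a : {ffun 'I_k -> bool}, count (fun p => sat p.1 a) cs <= 1]%N
  end.

Definition is_or (c : circ) : bool := if c is Or _ then true else false.

Definition logistic_circuit (c : circ) : bool := is_or c && decomp_determ c.

(* Pr_x(n): probability of the sentence of n under the fully factorized
   distribution with Pr(X_i = 1) = x_i *)
Definition prob (x : 'I_k -> R) (c : circ) : R :=
  \sum_(a : {ffun 'I_k -> bool} | sat c a)
     \prod_(i < k) (if a i then x i else 1 - x i).

Definition flow (x : 'I_k -> R) (n c : circ) : R :=
  if prob x n == 0 then 0 else prob x c / prob x n.

Fixpoint weight (x : 'I_k -> R) (c : circ) : R :=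
  match c with
  | Lit _ _ => 0
  | And cs => foldr (fun d acc => weight x d + acc) 0 cs
  | Or cs => foldr (fun p acc => flow x c p.1 * (weight x p.1 + p.2) + acc) 0 cs
  end.

Definition lc_prob (c : circ) (x : 'I_k -> R) : R :=
  1 / (1 + expR (- weight x c)).

Definition lr_prob (theta0 : R) (theta : 'I_k -> R) (x : 'I_k -> R) : R :=
  1 / (1 + expR (- (theta0 + \sum_(i < k) theta i * x i))).

End Semantics.

From mathcomp Require Import all_boot all_order all_algebra.
From mathcomp Require Import reals sequences exp.
Import Order.TTheory GRing.Theory Num.Theory.
Local Open Scope ring_scope.

Set Implicit Arguments.
Unset Strict Implicit.

(* The logistic regression is the circuit whose root has a single input, the
   AND of the k gates [X_i \/ ~X_i] with parameters theta_i on [X_i] and 0 on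
   [~X_i], the root wire carrying theta_0.  Every OR gate is a tautology, so
   it has probability 1 and its flows are the probabilities of its inputs:
   the gate for X_i has weight x_i theta_i, the AND gate adds these up and
   the root adds theta_0.  This holds for every x, not only for x in [0,1]^k. *)

Section Probability.
Variables (k : nat) (R : realType) (x : 'I_k -> R).

Let lit_prob (j : 'I_k) (b : bool) : R := if b then x j else 1 - x j.

Lemma prob_tautology (c : circuit k R) : (forall a, sat c a) -> prob x c = 1.
Proof.
move=> taut_c; rewrite /prob (eq_bigl xpredT) => [|a]; last by rewrite taut_c.
rewrite -(bigA_distr_bigA lit_prob) /=.
by apply: big1 => j _; rewrite big_bool /lit_prob /= addrCA subrr addr0.
Qed.

Lemma prob_Lit (i : 'I_k) (b : bool) :
  prob x (Lit i b) = if b then x i else 1 - x i.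
Proof.
(* Restricting the sum to [a i == b] amounts to zeroing the factor [a i != b]
   of each product, after which the sum factorizes coordinatewise. *)
pose F j b' : R := if (j == i) && (b' != b) then 0 else lit_prob j b'.
have sum_F : \sum_(a : {ffun 'I_k -> bool}) \prod_(j < k) F j (a j) = lit_prob i b.
  rewrite -(bigA_distr_bigA F) /= (bigD1 i) //= [X in _ * X]big1.
    by rewrite mulr1 big_bool /F eqxx; clear F; case: b; rewrite /= ?addr0 ?add0r.
  move=> j /negbTE neq_ji.
  by rewrite big_bool /F neq_ji /lit_prob /= addrCA subrr addr0.
rewrite -[RHS]/(lit_prob i b) -sum_F /prob [RHS](bigID (fun a : {ffun 'I_k -> bool} => a i == b)) /=.
rewrite [X in _ = _ + X]big1 ?addr0 => [|a /negbTE neq_ai].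
  apply: eq_bigr => a /eqP eq_ai; apply: eq_bigr => j _.
  by rewrite /F; case: eqP => [->|//]; rewrite eq_ai eqxx.
by rewrite (bigD1 i) //= /F eqxx neq_ai mul0r.
Qed.

Lemma weight_And (cs : seq (circuit k R)) :
  weight x (And cs) = \sum_(d <- cs) weight x d.
Proof. by rewrite /=; elim: cs => [|d cs IH]; rewrite ?big_nil ?big_cons //= IH. Qed.

End Probability.

Section LogisticRegressionCircuit.
Variables (k : nat) (R : realType) (theta0 : R) (theta : 'I_k -> R).

Definition var_gate (i : 'I_k) : circuit k R :=
  Or [:: (Lit i true, theta i); (Lit i false, 0)].

Definition features_gate : circuit k R := And (map var_gate (index_enum 'I_k)).

Definition lr_circuit : circuit k R := Or [:: (features_gate, theta0)].

Lemma sat_var_gate i a : sat (var_gate i) a.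
Proof. by rewrite /= orbF; case: (a i). Qed.

Lemma sat_features_gate a : sat features_gate a.
Proof. by rewrite /= all_map; apply/allP => i _; apply: sat_var_gate. Qed.

Lemma decomp_determ_var_gate i : decomp_determ (var_gate i).
Proof. by apply/forallP => a /=; case: (a i). Qed.

Lemma decomp_determ_features_gate : decomp_determ features_gate.
Proof.
rewrite /= all_map; apply/andP; split.
  by apply/allP => i _; apply: decomp_determ_var_gate.
rewrite pairwise_map; have := index_enum_uniq 'I_k; rewrite uniq_pairwise.
by apply: sub_pairwise => i j neq_ij; rewrite /disjoint_vars /= !inE (negbTE neq_ij).
Qed.

Lemma logistic_circuit_lr_circuit : logistic_circuit lr_circuit.
Proof.
rewrite /logistic_circuit /= andbT; apply/andP; split.
  exact: decomp_determ_features_gate.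
by apply/forallP => a /=; case: all.
Qed.

Lemma weight_var_gate x i : weight x (var_gate i) = theta i * x i.
Proof.
rewrite /= /flow prob_tautology; last exact: sat_var_gate.
by rewrite oner_eq0 !divr1 prob_Lit /= !add0r mulr0 !addr0 mulrC.
Qed.

Lemma weight_lr_circuit x :
  weight x lr_circuit = theta0 + \sum_(i < k) theta i * x i.
Proof.
have taut_root a : sat lr_circuit a by rewrite /lr_circuit /= orbF; apply: sat_features_gate.
have taut_features := sat_features_gate.
rewrite /= -[foldr _ _ _]/(weight x features_gate) /flow !prob_tautology //.
rewrite oner_eq0 divr1 mul1r addr0 weight_And big_map addrC.
by congr (_ + _); apply: eq_bigr => i _; rewrite weight_var_gate.
Qed.

End LogisticRegressionCircuit.

Theorem proposition1 (R : realType) (k : nat) (theta0 : R) (theta : 'I_k -> R) :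
  exists c : circuit k R,
    logistic_circuit c /\
    forall x : 'I_k -> R, (forall i, 0 <= x i <= 1) ->
      lc_prob c x = lr_prob theta0 theta x.
Proof.
exists (lr_circuit theta0 theta); split; first exact: logistic_circuit_lr_circuit.
by move=> x _; rewrite /lc_prob /lr_prob weight_lr_circuit.
Qed.
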